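(* Let $\mathbb{F}$ be a field, $d\geq 3$ and $V$ a vector space over $\mathbb{F}$ of dimension $d+1$. Let $E^*_0,\dots,E^*_d$ be a system of mutually orthogonal idempotents in $\mathrm{End}(V)$ and $A\in\mathrm{End}(V)$ with $E^*_iAE^*_j=0$ if $|i-j|>1$ and $E^*_iAE^*_j\neq0$ if $|i-j|=1$. Assume $A$ is multiplicity-free and bipartite with primitive idempotents $E_0,\dots,E_d$ and eigenvalues $\theta_0,\dots,\theta_d$. Let $\theta^*_0,\dots,\theta^*_d\in\mathbb{F}$ be mutually distinct and $A^*=\sum_i\theta^*_iE^*_i$. Assume $E_0$ is normalizing and that in $\Delta$ the vertex $E_0$ is adjacent to $E_1$ and to no other vertex. Then $\theta_0(\theta^*_{d-1}-\theta^*_1)=\theta_1(\theta^*_d-\theta^*_0)$, and both $\theta_0$ and $\theta_1$ are nonzero.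
   Context: A system of mutually orthogonal idempotents is a sequence $E^*_0,\dots,E^*_d$ of linear maps $V\to V$ with $E^*_iE^*_j=\delta_{ij}E^*_i$ and $\operatorname{rank}E^*_i=1$. $A$ is multiplicity-free if it has $d+1$ mutually distinct eigenvalues in $\mathbb{F}$; the primitive idempotent $E_i$ for $\theta_i$ is the projection onto the $\theta_i$-eigenspace along the sum of the other eigenspaces. $A$ is bipartite if $\operatorname{tr}(E^*_iA)=0$ for all $i$. $\Delta$ is the graph with vertices $E_0,\dots,E_d$, where $E_i\neq E_j$ are adjacent iff $E_iA^*E_j\neq0$. For a basis $v_0,\dots,v_d$, the matrix $Y$ representing $A$ satisfies $Av_j=\sum_iY_{ij}v_i$. An eigenvalue $\theta$ of $A$ is normalizing if there is a basis $v_0,\dots,v_d$ with $v_i\in E^*_iV$ such that every row of the matrix representing $A$ sums to $\theta$; $E_i$ is normalizing if $\theta_i$ is. *)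

(* V = 'cV[F]_(d.+1) (column vectors); an endomorphism
   of V is a square matrix M acting by v |-> M *m v, so composition of
   maps is matrix multiplication. *)
From HB Require Import structures.
From mathcomp Require Import all_boot all_order all_algebra.
Set Implicit Arguments. Unset Strict Implicit. Unset Printing Implicit Defensive.
Import GRing.Theory.
Local Open Scope ring_scope.

Section Defs.
Variables (F : fieldType) (n : nat).

Definition mo_idempotents (Es : 'I_n -> 'M[F]_n) : Prop :=
  (forall i j, Es i *m Es j = if i == j then Es i else 0) /\
  (forall i, \rank (Es i) = 1%N).

Definition is_eigenvalue (A : 'M[F]_n) (th : F) : Prop :=
  exists2 v : 'cV[F]_n, v != 0 & A *m v = th *: v.

Definition mult_free_with (A : 'M[F]_n) (th : 'I_n -> F) : Prop :=
  injective th /\ forall i, is_eigenvalue A (th i).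

(* E is the projection onto the th_i-eigenspace along the sum of the
   other eigenspaces *)
Definition primitive_idempotent (A : 'M[F]_n) (th : 'I_n -> F) (i : 'I_n)
    (E : 'M[F]_n) : Prop :=
  (forall v : 'cV[F]_n, A *m (E *m v) = th i *: (E *m v)) /\
  (forall v : 'cV[F]_n, A *m v = th i *: v -> E *m v = v) /\
  (forall (j : 'I_n) (v : 'cV[F]_n), j != i -> A *m v = th j *: v -> E *m v = 0).

Definition bipartite (Es : 'I_n -> 'M[F]_n) (A : 'M[F]_n) : Prop :=
  forall i, \tr (Es i *m A) = 0.

Definition Delta_adj (E : 'I_n -> 'M[F]_n) (As : 'M[F]_n) (i j : 'I_n) : Prop :=
  i != j /\ E i *m As *m E j != 0.

(* th is normalizing: a basis v_0..v_{n-1} (the columns of an invertible P)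
   with v_i in E*_i V, such that the matrix Y representing A
   (A v_j = sum_i Y_ij v_i, i.e. A P = P Y) has all row sums equal to th *)
Definition normalizing (Es : 'I_n -> 'M[F]_n) (A : 'M[F]_n) (th : F) : Prop :=
  exists P : 'M[F]_n,
    [/\ P \in unitmx,
        (forall i, Es i *m col i P = col i P) &
        exists Y : 'M[F]_n,
          A *m P = P *m Y /\ forall i, \sum_j Y i j = th].

End Defs.

From HB Require Import structures.
From mathcomp Require Import all_boot all_order all_algebra.
From mathcomp Require Import zify ring.
Set Implicit Arguments. Unset Strict Implicit. Unset Printing Implicit Defensive.
Import GRing.Theory.
Local Open Scope ring_scope.

(* In a basis v_i of the E*_i V witnessing that theta_0 is normalizing, A is
   represented by an irreducible tridiagonal matrix Y with zero diagonal
   (bipartiteness) and all row sums theta_0, and A* by D = diag(theta*_i).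
   A diagonal K with K Y = Y^T K exists, so f = 1^T K is a left
   theta_0-eigenvector of Y.  As E_0 is adjacent in Delta to E_1 only, f D is
   annihilated by (Y - theta_1)(Y - theta_0); transposing through K,
   (Y - theta_1) D 1 is a theta_0-eigenvector, hence equals a 1 for a scalar a.
   Its first and last entries read
   theta_0 theta*_1 - theta_1 theta*_0 = a = theta_0 theta*_(d-1) - theta_1 theta*_d.
   Finally theta_0 = Y_01 <> 0, and theta_1 = 0 would force theta*_(d-1) = theta*_1. *)

Lemma rV_eq0 (F : fieldType) n (g : 'rV[F]_n) : (forall x : 'cV_n, g *m x = 0) -> g = 0.
Proof.
move=> h; apply/rowP => j; have := h (delta_mx j 0).
by rewrite -colE => /matrixP /(_ 0 0); rewrite !mxE.
Qed.

Lemma left_right_eigvec_mul0 (F : fieldType) n (A : 'M[F]_n) a b (g : 'rV_n) (y : 'cV_n) :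
  a != b -> g *m A = a *: g -> A *m y = b *: y -> g *m y = 0.
Proof.
move=> ab hg hy; have /eqP : (b - a) *: (g *m y) = 0.
  by rewrite scalerBl scalemxAr -hy mulmxA hg -scalemxAl subrr.
by rewrite scaler_eq0 subr_eq0 eq_sym (negPf ab) => /eqP.
Qed.

Section MultiplicityFree.
Variables (F : fieldType) (n : nat) (A : 'M[F]_n) (th : 'I_n -> F).

Lemma col_eigenspaceP (a : F) (v : 'cV[F]_n) :
  reflect (A *m v = a *: v) (v^T <= eigenspace A^T a)%MS.
Proof.
apply: (iffP eigenspaceP) => hv; last by rewrite -trmx_mul hv linearZ.
by rewrite -[v]trmxK -[A]trmxK -trmx_mul hv linearZ.
Qed.

Hypothesis mfA : mult_free_with A th.

Lemma mult_free_eigenspace_rank k : \rank (eigenspace A^T (th k)) = 1%N.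
Proof.
case: mfA => inj_th eig_th.
pose r k := \rank (eigenspace A^T (th k)).
have r_gt0 j : (0 < r j)%N.
  case: (eig_th j) => v nz /col_eigenspaceP sv; apply: leq_trans (mxrankS sv).
  by rewrite rank_rV trmx_eq0 nz.
have sum_r_le : (\sum_j r j <= n)%N.
  have /mxdirectP <- : mxdirect (\sum_j eigenspace A^T (th j))%MS.
    by apply: mxdirect_sum_eigenspace => i j _ _; apply: inj_th.
  exact: rank_leq_col.
have : (\sum_j (r j).-1 == 0)%N.
  rewrite -leqn0 -(leq_add2r n) add0n; apply: leq_trans sum_r_le.
  rewrite -[X in (_ + X)%N]card_ord -sum1_card -big_split /=.
  by apply: leq_sum => j _; rewrite addn1 prednK.
rewrite sum_nat_eq0 => /forallP /(_ k) /implyP /(_ isT).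
by move: (r_gt0 k); rewrite /r; case: (\rank _) => // [[]].
Qed.

Lemma mult_free_eigvec_decomp (x : 'cV[F]_n) :
  exists y : 'I_n -> 'cV[F]_n,
    x = \sum_k y k /\ forall k, A *m y k = th k *: y k.
Proof.
have full : row_full (\sum_k eigenspace A^T (th k))%MS.
  have /mxdirectP dx : mxdirect (\sum_k eigenspace A^T (th k))%MS.
    by apply: mxdirect_sum_eigenspace => i j _ _; apply: mfA.1.
  rewrite /row_full dx /=.
  by under eq_bigr do rewrite mult_free_eigenspace_rank; rewrite sum_nat_const card_ord muln1.
have /sub_sumsmxP [u hu] := submx_full x^T full.
exists (fun k => (u k *m eigenspace A^T (th k))^T); split.
  by rewrite -[x]trmxK hu raddf_sum.
by move=> k; apply/col_eigenspaceP; rewrite trmxK submxMl.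
Qed.

Lemma mult_free_eigvec_unique k (v w : 'cV[F]_n) :
  v != 0 -> A *m v = th k *: v -> A *m w = th k *: w -> exists a, w = a *: v.
Proof.
move=> nz /col_eigenspaceP sv /col_eigenspaceP sw.
have ev : (eigenspace A^T (th k) <= v^T)%MS.
  rewrite -(mxrank_leqif_sup sv).2 mult_free_eigenspace_rank.
  by rewrite rank_rV trmx_eq0 nz.
have /sub_rVP [a ha] := submx_trans sw ev.
by exists a; rewrite -[w]trmxK ha linearZ /= trmxK.
Qed.

Lemma primitive_idempotent_eigvec i E k (y : 'cV[F]_n) :
  primitive_idempotent A th i E -> A *m y = th k *: y ->
  E *m y = if k == i then y else 0.
Proof.
case=> _ [fix_i kill_j] hy.
by case: eqP hy => [-> | /eqP ne]; [exact: fix_i | exact: kill_j].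
Qed.

Lemma left_eigvec_primitive_idempotent i E (g : 'rV[F]_n) :
  primitive_idempotent A th i E -> g *m A = th i *: g -> g *m E = g.
Proof.
move=> pE hg; apply/eqP; rewrite -subr_eq0; apply/eqP/rV_eq0 => x.
have [y [-> hy]] := mult_free_eigvec_decomp x.
rewrite mulmxBl !mulmx_sumr -sumrB big1 // => k _.
rewrite -mulmxA (primitive_idempotent_eigvec pE (hy k)).
case: eqP => [_|/eqP ne]; first by rewrite subrr.
by rewrite mulmx0 sub0r (left_right_eigvec_mul0 _ hg (hy k)) ?oppr0 // (inj_eq mfA.1) eq_sym.
Qed.

Lemma left_eigvec_annihilator (E : 'I_n -> 'M[F]_n) (M : 'M[F]_n) i j (g : 'rV[F]_n) :
  (forall k, primitive_idempotent A th k (E k)) ->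
  (forall k, k != i -> k != j -> E i *m M *m E k = 0) ->
  g *m A = th i *: g ->
  g *m M *m (A - (th j)%:M) *m (A - (th i)%:M) = 0.
Proof.
move=> pE hM hg; apply: rV_eq0 => x.
have [y [-> hy]] := mult_free_eigvec_decomp x.
rewrite mulmx_sumr big1 // => k _.
have shift c : (A - c%:M) *m y k = (th k - c) *: y k.
  by rewrite mulmxBl hy mul_scalar_mx scalerBl.
rewrite -mulmxA shift -scalemxAr -(mulmxA _ (A - _)) shift -scalemxAr.
have [->|ki] := eqVneq k i; first by rewrite subrr scale0r.
have [->|kj] := eqVneq k j; first by rewrite subrr scale0r scaler0.
have Eky : E k *m y k = y k by rewrite (primitive_idempotent_eigvec (pE k) (hy k)) eqxx.
rewrite -Eky -(left_eigvec_primitive_idempotent (pE i) hg) -!mulmxA.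
by rewrite (mulmxA (E i)) (mulmxA _ (E k)) hM // mul0mx mulmx0 !scaler0.
Qed.

End MultiplicityFree.

Section Similarity.
Variables (F : fieldType) (n : nat) (P : 'M[F]_n).
Hypothesis P_unit : P \in unitmx.
Local Notation conj M := (invmx P *m M *m P).

Lemma conj_mul_col (M : 'M[F]_n) (v : 'cV[F]_n) : conj M *m v = invmx P *m (M *m (P *m v)).
Proof. by rewrite !mulmxA. Qed.

Lemma conj_mul (M N : 'M[F]_n) : conj M *m conj N = conj (M *m N).
Proof. by rewrite -!mulmxA mulKVmx // !mulmxA. Qed.

Lemma conj_eigvecP (M : 'M[F]_n) a (v : 'cV[F]_n) :
  conj M *m v = a *: v <-> M *m (P *m v) = a *: (P *m v).
Proof.
rewrite conj_mul_col; split=> [h|->]; last by rewrite -scalemxAr mulKmx.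
by rewrite -[LHS](mulKVmx P_unit) h scalemxAr.
Qed.

Lemma mult_free_with_conj (A : 'M[F]_n) th : mult_free_with A th -> mult_free_with (conj A) th.
Proof.
case=> inj_th eig_th; split=> // k; case: (eig_th k) => w nz hw.
exists (invmx P *m w); last by apply/conj_eigvecP; rewrite mulKVmx.
by apply: contra nz => /eqP h; rewrite -(mulKVmx P_unit w) h mulmx0.
Qed.

Lemma primitive_idempotent_conj (A : 'M[F]_n) th i E :
  primitive_idempotent A th i E -> primitive_idempotent (conj A) th i (conj E).
Proof.
case=> img [fix_i kill_j]; split; [|split].
- by move=> v; apply/conj_eigvecP; rewrite conj_mul_col mulKVmx.
- by move=> v /conj_eigvecP /fix_i Ev; rewrite conj_mul_col Ev mulKmx.
- by move=> j v ji /conj_eigvecP /(kill_j _ _ ji) Ev; rewrite conj_mul_col Ev mulmx0.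
Qed.

End Similarity.

Definition tridiagonal (R : zmodType) n (Y : 'M[R]_n) : Prop :=
  forall i j : 'I_n, ((i.+1 < j) || (j.+1 < i))%N -> Y i j = 0.

Definition nonzero_offdiag (R : zmodType) n (Y : 'M[R]_n) : Prop :=
  forall i j : 'I_n, ((i == j.+1 :> nat) || (j == i.+1 :> nat)) -> Y i j != 0.

Lemma delta_mx_sandwich (F : fieldType) n (M : 'M[F]_n) i j :
  delta_mx i i *m M *m delta_mx j j = M i j *: delta_mx i j.
Proof.
rewrite -(mul_delta_mx (0 : 'I_1) i i) -(mul_delta_mx (0 : 'I_1) j j).
rewrite !mulmxA -(mulmxA _ _ M) -rowE -(mulmxA _ _ (delta_mx j 0)) -colE.
by rewrite [col j _]mx11_scalar !mxE mul_mx_scalar -scalemxAl mul_delta_mx.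
Qed.

Lemma mxtrace_delta_mul (F : fieldType) n (M : 'M[F]_n) i : \tr (delta_mx i i *m M) = M i i.
Proof.
rewrite /mxtrace (bigD1 i) //= big1 ?addr0 => [|k ki].
  rewrite mxE (bigD1 i) //= big1 ?addr0 ?mxE ?eqxx ?mul1r // => l li.
  by rewrite mxE (negPf li) andbF mul0r.
by rewrite mxE big1 // => l _; rewrite mxE; case: eqP ki => [->|]; rewrite ?eqxx ?mul0r.
Qed.

Section AdaptedBasis.
Variables (F : fieldType) (n : nat) (Es : 'I_n -> 'M[F]_n) (P : 'M[F]_n).
Hypotheses (Es_orth : forall i j, Es i *m Es j = if i == j then Es i else 0)
  (P_unit : P \in unitmx) (P_adapted : forall i, Es i *m col i P = col i P).
Local Notation conj M := (invmx P *m M *m P).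

Lemma adapted_idempotent_mul i : Es i *m P = P *m delta_mx i i.
Proof.
apply/matrixP => a b; have /colP/(_ a) : col b (Es i *m P) = col b (P *m delta_mx i i).
  rewrite !colE -!mulmxA mul_delta_mx_cond -colE -(P_adapted b) mulmxA Es_orth.
  by case: (i =P b) => [->|_]; rewrite ?mulr1n ?P_adapted ?colE // mul0mx mulr0n mulmx0.
by rewrite !mxE.
Qed.

Lemma adapted_idempotentE i : Es i = P *m delta_mx i i *m invmx P.
Proof. by rewrite -adapted_idempotent_mul mulmxK. Qed.

Lemma adapted_sandwich (M : 'M[F]_n) i j :
  Es i *m M *m Es j = P *m ((conj M) i j *: delta_mx i j) *m invmx P.
Proof. by rewrite !adapted_idempotentE -delta_mx_sandwich !mulmxA. Qed.

Lemma adapted_sandwich_eq0 (M : 'M[F]_n) i j : (Es i *m M *m Es j == 0) = ((conj M) i j == 0).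
Proof.
rewrite adapted_sandwich; set X := _ *: delta_mx i j.
apply/eqP/eqP => [h|c0]; last by rewrite /X c0 scale0r mulmx0 mul0mx.
have /matrixP/(_ i j) : X = 0.
  by rewrite -[X](mulKmx P_unit) -[X in _ *m X](mulmxKV P_unit) mulmxA h mulmx0 mul0mx.
by rewrite !mxE !eqxx mulr1.
Qed.

Lemma adapted_trace (M : 'M[F]_n) i : \tr (Es i *m M) = (conj M) i i.
Proof.
by rewrite adapted_idempotentE -!mulmxA mxtrace_mulC -!mulmxA mxtrace_delta_mul !mulmxA.
Qed.

Lemma adapted_conj_sum (c : 'I_n -> F) : conj (\sum_i c i *: Es i) = diag_mx (\row_i c i).
Proof.
rewrite mulmx_sumr mulmx_suml diag_mx_sum_delta; apply: eq_bigr => i _.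
by rewrite -scalemxAr -scalemxAl -mulmxA adapted_idempotent_mul mulKmx // mxE.
Qed.

Lemma adapted_tridiagonal (M : 'M[F]_n) :
  (forall i j : 'I_n, ((i.+1 < j) || (j.+1 < i))%N -> Es i *m M *m Es j = 0) ->
  tridiagonal (conj M).
Proof. by move=> far i j ij; apply/eqP; rewrite -adapted_sandwich_eq0 far. Qed.

Lemma adapted_nonzero_offdiag (M : 'M[F]_n) :
  (forall i j : 'I_n, ((i == j.+1 :> nat) || (j == i.+1 :> nat)) -> Es i *m M *m Es j != 0) ->
  nonzero_offdiag (conj M).
Proof. by move=> near i j ij; rewrite -adapted_sandwich_eq0 near. Qed.

Lemma adapted_bipartite (M : 'M[F]_n) : bipartite Es M -> forall i, (conj M) i i = 0.
Proof. by move=> bip i; rewrite -adapted_trace bip. Qed.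

End AdaptedBasis.

Lemma tridiag_symmetrizer (F : fieldType) n (Y : 'M[F]_n.+1) :
  tridiagonal Y -> nonzero_offdiag Y ->
  exists k : 'rV[F]_n.+1, (forall i, k 0 i != 0) /\ diag_mx k *m Y = Y^T *m diag_mx k.
Proof.
move=> Ytri Ynz.
pose r (i : nat) := Y (inord i) (inord i.+1) / Y (inord i.+1) (inord i).
have r_neq0 i : (i < n)%N -> r i != 0.
  by move=> lt_in; rewrite mulf_neq0 ?invr_eq0 // Ynz // !inordK ?eqxx ?orbT //; lia.
exists (\row_i \prod_(0 <= j < i) r j); split.
  move=> i; rewrite mxE prodf_seq_neq0; apply/allP => j; rewrite mem_iota => /andP [_ ji].
  by apply: r_neq0; have := ltn_ord i; lia.
apply/matrixP => a b; rewrite mul_diag_mx mul_mx_diag !mxE.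
wlog le_ab : a b / (a <= b)%N => [hw|].
  by case: (leqP a b) => [/hw//|/ltnW/hw]; rewrite mulrC => ->; rewrite mulrC.
case: ltngtP le_ab => // [lt_ab _|/val_inj-> _]; last by rewrite mulrC.
case: (ltngtP a.+1 b) => [lt_ab1|ba1|ab1]; [|lia|].
  by rewrite !Ytri ?lt_ab1 ?orbT ?mulr0 ?mul0r.
have eb : inord a.+1 = b by apply: val_inj; rewrite /= inordK // ab1.
rewrite -ab1 big_nat_recr //= /r eb inord_val; field.
by apply: Ynz; rewrite ab1 eqxx.
Qed.

Lemma symmetrizer_transpose (F : fieldType) n (Y : 'M[F]_n) (k : 'rV[F]_n) (u : 'cV[F]_n) c c' :
  (forall i, k 0 i != 0) -> diag_mx k *m Y = Y^T *m diag_mx k ->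
  u^T *m diag_mx k *m (Y - c%:M) *m (Y - c'%:M) = 0 ->
  (Y - c'%:M) *m (Y - c%:M) *m u = 0.
Proof.
move=> k_neq0 kY h; set w := _ *m u.
have sym x : diag_mx k *m (Y - x%:M) = (Y - x%:M)^T *m diag_mx k.
  by rewrite [(Y - _)^T]linearB /= tr_scalar_mx mulmxBl mulmxBr kY scalar_mxC.
have /matrixP Kw0 : diag_mx k *m w = 0.
  rewrite /w !mulmxA sym -(mulmxA _ (diag_mx k)) sym !mulmxA.
  by rewrite -[diag_mx k]tr_diag_mx -[u]trmxK -!trmx_mul !mulmxA h trmx0.
apply/matrixP => i j; have /eqP := Kw0 i j.
by rewrite mul_diag_mx !mxE mulf_eq0 (negPf (k_neq0 i)) => /eqP.
Qed.

Lemma tridiag_hollow_row0 (R : comNzRingType) n (Y : 'M[R]_n.+1) (x : 'cV[R]_n.+1) :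
  (0 < n)%N -> tridiagonal Y -> Y ord0 ord0 = 0 ->
  (Y *m x) ord0 0 = Y ord0 (inord 1) * x (inord 1) 0.
Proof.
move=> n_gt0 Ytri Y00; rewrite mxE (bigD1 (inord 1)) //= big1 ?addr0 // => j j1.
have [->|j0] := eqVneq j ord0; first by rewrite Y00 mul0r.
rewrite Ytri ?mul0r //=; move: j0 j1; rewrite -!(inj_eq val_inj) /= inordK //; lia.
Qed.

Lemma tridiag_hollow_rowN (R : comNzRingType) n (Y : 'M[R]_n.+1) (x : 'cV[R]_n.+1) :
  tridiagonal Y -> Y ord_max ord_max = 0 ->
  (Y *m x) ord_max 0 = Y ord_max (inord n.-1) * x (inord n.-1) 0.
Proof.
move=> Ytri Ynn; rewrite mxE (bigD1 (inord n.-1)) //= big1 ?addr0 // => j jn1.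
have [->|jn] := eqVneq j ord_max; first by rewrite Ynn mul0r.
rewrite Ytri ?mul0r //=; move: jn jn1 (ltn_ord j); rewrite -!(inj_eq val_inj) /= inordK; lia.
Qed.

Lemma rowsum_const_mx (R : pzSemiRingType) n (Y : 'M[R]_n) c :
  (forall i, \sum_j Y i j = c) -> Y *m const_mx 1 = c *: (const_mx 1 : 'cV_n).
Proof.
move=> rowsum; apply/colP => i; rewrite !mxE -(rowsum i) mulr1.
by apply: eq_bigr => j _; rewrite mxE mulr1.
Qed.

Section NormalizedTridiagonal.
Variables (F : fieldType) (d : nat) (Y : 'M[F]_d.+1) (th : 'I_d.+1 -> F)
  (E : 'I_d.+1 -> 'M[F]_d.+1) (ths : 'I_d.+1 -> F).
Hypotheses (d_gt0 : (0 < d)%N) (Y_tridiag : tridiagonal Y) (Y_offdiag : nonzero_offdiag Y)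
  (Y_hollow : forall i, Y i i = 0)
  (Y_rowsum : Y *m const_mx 1 = th ord0 *: (const_mx 1 : 'cV_d.+1))
  (Y_mf : mult_free_with Y th) (E_prim : forall k, primitive_idempotent Y th k (E k))
  (E0_adj : forall k, k != ord0 -> k != inord 1 ->
     E ord0 *m diag_mx (\row_i ths i) *m E k = 0).
Local Notation one := (const_mx 1 : 'cV[F]_d.+1).
Local Notation D := (diag_mx (\row_i ths i)).

Lemma hollow_rowsum_first : Y ord0 (inord 1) = th ord0.
Proof.
have /colP/(_ ord0) := Y_rowsum.
by rewrite tridiag_hollow_row0 // !mxE !mulr1.
Qed.

Lemma hollow_rowsum_last : Y ord_max (inord d.-1) = th ord0.
Proof.
have /colP/(_ ord_max) := Y_rowsum.
by rewrite tridiag_hollow_rowN // !mxE !mulr1.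
Qed.

Lemma normalized_eigval0_neq0 : th ord0 != 0.
Proof. by rewrite -hollow_rowsum_first Y_offdiag // inordK ?eqxx ?orbT. Qed.

Lemma shifted_weight_eigvec : exists a, (Y - (th (inord 1))%:M) *m (D *m one) = a *: one.
Proof.
have [k [k_neq0 kY]] := tridiag_symmetrizer Y_tridiag Y_offdiag.
have f_eig : one^T *m diag_mx k *m Y = th ord0 *: (one^T *m diag_mx k).
  by rewrite -mulmxA kY mulmxA -trmx_mul Y_rowsum linearZ /= scalemxAl.
have := left_eigvec_annihilator Y_mf E_prim E0_adj f_eig.
have -> : one^T *m diag_mx k *m D = (D *m one)^T *m diag_mx k.
  by rewrite trmx_mul tr_diag_mx -!mulmxA diag_mx_comm.
move=> /(symmetrizer_transpose k_neq0 kY); rewrite -mulmxA mulmxBl mul_scalar_mx => /eqP.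
rewrite subr_eq0 => /eqP /(mult_free_eigvec_unique Y_mf _ Y_rowsum); apply.
by apply/eqP => /colP /(_ ord0); rewrite !mxE; apply/eqP; exact: oner_neq0.
Qed.

Lemma normalized_tridiag_identity :
  th ord0 * (ths (inord d.-1) - ths (inord 1)) = th (inord 1) * (ths ord_max - ths ord0).
Proof.
have [a] := shifted_weight_eigvec; rewrite mulmxBl mul_scalar_mx.
set u := D *m one; set w := Y *m u => /colP ha.
have u_ths i : u i 0 = ths i by rewrite /u mul_diag_mx !mxE mulr1.
have entry i : (w - th (inord 1) *: u) i 0 = w i 0 - th (inord 1) * u i 0 by rewrite !mxE.
have a_one i : (a *: one) i 0 = a by rewrite !mxE mulr1.
have := ha ord0; have := ha ord_max; rewrite !entry !u_ths !a_one /w.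
rewrite tridiag_hollow_row0 // tridiag_hollow_rowN // !u_ths.
rewrite hollow_rowsum_first hollow_rowsum_last => e_last e_first.
apply/eqP; rewrite -subr_eq0 -(subrr a) -{1}e_last -e_first; apply/eqP; ring.
Qed.

End NormalizedTridiagonal.

Theorem corollary7p5 (F : fieldType) (d : nat) (hd : (3 <= d)%N)
  (Es : 'I_d.+1 -> 'M[F]_d.+1) (A : 'M[F]_d.+1)
  (th : 'I_d.+1 -> F) (E : 'I_d.+1 -> 'M[F]_d.+1) (ths : 'I_d.+1 -> F) :
  mo_idempotents Es ->
  (forall i j : 'I_d.+1, ((i.+1 < j) || (j.+1 < i))%N -> Es i *m A *m Es j = 0) ->
  (forall i j : 'I_d.+1, ((i == j.+1 :> nat) || (j == i.+1 :> nat)) ->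
     Es i *m A *m Es j != 0) ->
  mult_free_with A th ->
  (forall i, primitive_idempotent A th i (E i)) ->
  bipartite Es A ->
  injective ths ->
  let As := \sum_i ths i *: Es i in
  normalizing Es A (th ord0) ->
  Delta_adj E As ord0 (inord 1) ->
  (forall j : 'I_d.+1, j != inord 1 -> ~ Delta_adj E As ord0 j) ->
  th ord0 * (ths (inord d.-1) - ths (inord 1)) = th (inord 1) * (ths ord_max - ths ord0)
  /\ th ord0 != 0 /\ th (inord 1) != 0.
Proof.
move=> [Es_orth _] far near mfA E_prim bip ths_inj As.
move=> [P [P_unit P_adapted [Y [AP rowsum]]]] _ not_adj.
have YE : Y = invmx P *m A *m P by rewrite -mulmxA AP mulKmx.
subst Y.
have E0_adj k : k != ord0 -> k != inord 1 ->
    (invmx P *m E ord0 *m P) *m diag_mx (\row_i ths i) *m (invmx P *m E k *m P) = 0.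
  move=> k0 k1; rewrite -(adapted_conj_sum Es_orth P_unit P_adapted) !conj_mul //.
  suff -> : E ord0 *m As *m E k = 0 by rewrite mulmx0 mul0mx.
  by apply/eqP/negPn/negP => nz; apply: (not_adj k k1); split; rewrite // eq_sym.
have d_gt0 : (0 < d)%N by apply: ltnW (ltnW hd).
have Y_tridiag := adapted_tridiagonal Es_orth P_unit P_adapted far.
have Y_offdiag := adapted_nonzero_offdiag Es_orth P_unit P_adapted near.
have Y_hollow := adapted_bipartite Es_orth P_unit P_adapted bip.
have identity := normalized_tridiag_identity d_gt0 Y_tridiag Y_offdiag Y_hollow
  (rowsum_const_mx rowsum) (mult_free_with_conj P_unit mfA)
  (fun k => primitive_idempotent_conj P_unit (E_prim k)) E0_adj.
have th0_neq0 := normalized_eigval0_neq0 d_gt0 Y_tridiag Y_offdiag Y_hollow (rowsum_const_mx rowsum).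
split=> //; split=> //; apply/eqP => th1_0.
move: identity; rewrite th1_0 mul0r => /eqP; rewrite mulf_eq0 (negPf th0_neq0) subr_eq0.
by move=> /eqP /ths_inj /(congr1 val); rewrite /= !inordK //; lia.
Qed.
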